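(* In dimension $d=1$, every Poisson hard sphere process almost surely does not percolate.
   Context: A sphere process is a simple point process $\Lambda$ on $\mathbb{R}^d\times[0,\infty)$; its support is $[\Lambda]=\{(x,r):\Lambda(\{(x,r)\})=1\}$, and $(x,r)\in[\Lambda]$ means there is a sphere (closed ball) of radius $r\ge0$ centred at $x$. The centre process is $\widetilde\Lambda(\cdot)=\Lambda(\cdot\times[0,\infty))$; $\Lambda$ is a Poisson sphere process if $\widetilde\Lambda$ is a homogeneous Poisson process. $\Lambda$ is a hard sphere process if almost surely $|x-y|\ge r+s$ for all distinct $(x,r),(y,s)\in[\Lambda]$. Let $G(\Lambda)=\{y:|y-x|\le r\text{ for some }(x,r)\in[\Lambda]\}$; its connected components are clusters, and $\Lambda$ percolates if some cluster is unbounded. *)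

(* Sphere processes in dimension d = 1:
   a sphere (closed ball) of radius r >= 0 centred at x in R is a pair (x, r). *)
From HB Require Import structures.
From mathcomp Require Import all_boot all_order all_algebra.
From mathcomp Require Import all_classical all_reals all_analysis.
Set Implicit Arguments. Unset Strict Implicit. Unset Printing Implicit Defensive.
Import Order.TTheory GRing.Theory Num.Theory.
Import numFieldNormedType.Exports.
Local Open Scope classical_set_scope.
Local Open Scope ring_scope.

Section SphereProcess.
Context {R : realType} {dT : measure_display} {T : measurableType dT}.

Definition has_n_points (U : Type) (A : set U) (n : nat) : Prop := (A #= `I_n)%card.

(* Bounded subsets of R x R (product norm) are those of [bounded_set]. *)

Definition sphere_process (Lam : T -> set (R * R)) : Prop :=
  [/\ forall w, Lam w `<=` [set p | 0 <= p.2],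
      forall w (B : set (R * R)), bounded_set B -> finite_set (Lam w `&` B) &
      forall (B : set (R * R)) (n : nat), measurable B -> bounded_set B ->
        measurable [set w | has_n_points (Lam w `&` B) n]].

Definition centre_pts (Lam : T -> set (R * R)) (w : T) (B : set R) : set (R * R) :=
  Lam w `&` (B `*` [set r | 0 <= r]).

Definition leb (B : set R) : R := fine (lebesgue_measure B).

Definition homogeneous_Poisson_centres (P : probability T R)
    (Lam : T -> set (R * R)) : Prop :=
  exists lam : R, 0 < lam /\
  [/\ forall w (B : set R), bounded_set B -> finite_set (centre_pts Lam w B),
      forall (B : set R) (n : nat), measurable B -> bounded_set B ->
        measurable [set w | has_n_points (centre_pts Lam w B) n] &
      forall (k : nat) (B : 'I_k -> set R) (n : 'I_k -> nat),
        (forall i, measurable (B i)) -> (forall i, bounded_set (B i)) ->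
        (forall i j, i != j -> B i `&` B j = set0) ->
        P [set w | forall i, has_n_points (centre_pts Lam w (B i)) (n i)] =
        (\prod_(i < k) (expR (- (lam * leb (B i))) *
                        (lam * leb (B i)) ^+ n i / (n i)`!%:R))%:E].

Definition Poisson_sphere_process (P : probability T R)
    (Lam : T -> set (R * R)) : Prop :=
  sphere_process Lam /\ homogeneous_Poisson_centres P Lam.

Definition hard_sphere_process (P : probability T R)
    (Lam : T -> set (R * R)) : Prop :=
  sphere_process Lam /\
  {ae P, forall w, forall p q, Lam w p -> Lam w q -> p <> q ->
                     p.2 + q.2 <= `|p.1 - q.1|}.

End SphereProcess.

Definition covered {R : realType} (S : set (R * R)) : set R :=
  [set y | exists2 p, S p & `|y - p.1| <= p.2].

Definition percolates {R : realType} (S : set (R * R)) : Prop :=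
  exists2 y, covered S y & ~ bounded_set (connected_component (covered S) y).

(* A gap pattern at x -- two centres in [x, x + 1/8), none in [x + 1/8, x + 7/8)
   and two in [x + 7/8, x + 1) -- leaves x + 1/2 uncovered by any hard sphere
   configuration: two hard spheres centred in a window of length 1/8 both have
   radius < 1/8, so they do not reach x + 1/2, and by the hard-core condition
   they shield x + 1/2 from every sphere centred beyond them.  Patterns at
   points at mutual distance >= 1 use disjoint windows, so under the Poisson
   law they are independent events of the same positive probability; hence
   almost surely patterns occur at arbitrarily large positive and negative
   integers, and every cluster lies between two uncovered points. *)

From HB Require Import structures.
From mathcomp Require Import all_boot all_order all_algebra.
From mathcomp Require Import all_classical all_reals all_analysis.
From mathcomp Require Import ring lra zify.
Set Implicit Arguments. Unset Strict Implicit. Unset Printing Implicit Defensive.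
Import Order.TTheory GRing.Theory Num.Theory.
Import numFieldNormedType.Exports.
Local Open Scope classical_set_scope.
Local Open Scope ring_scope.

Lemma bounded_set_sub_itv (R : realType) (A : set R) (a b : R) :
  A `<=` [set x | a <= x <= b] -> bounded_set A.
Proof.
move=> Aab; rewrite /= /bounded_near; near=> M => x /Aab /andP[ax xb] /=.
have: `|x| <= `|a| + `|b|.
  have /andP[na _] : - `|a| <= a <= `|a| by rewrite -ler_norml.
  have /andP[_ pb] : - `|b| <= b <= `|b| by rewrite -ler_norml.
  have := normr_ge0 a; have := normr_ge0 b.
  by rewrite ler_norml => *; apply/andP; split; lra.
move/le_trans; apply; near: M; apply: nbhs_pinfty_ge; exact: num_real.
Unshelve. all: by end_near. Qed.

Lemma has_0_points (U : Type) (A : set U) : has_n_points A 0 -> A = set0.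
Proof. by rewrite /has_n_points II0 card_eq0 => /eqP. Qed.

Lemma has_2_points (U : pointedType) (A : set U) : has_n_points A 2 ->
  exists a b, [/\ A a, A b & a <> b].
Proof.
rewrite /has_n_points card_eq_sym => /card_set_bijP [f [ff finj _]].
exists (f 0%N), (f 1%N); split; [exact: ff|exact: ff|].
by move=> /finj; rewrite !inE /= => /(_ isT isT).
Qed.

Lemma forall_ord_divmod (k m : nat) (F : nat -> nat -> Prop) : (0 < k)%N ->
  (forall i : 'I_(m * k), F (i %/ k)%N (i %% k)%N) <->
  (forall j r, (j < m)%N -> (r < k)%N -> F j r).
Proof.
move=> k_gt0; split=> [FF j r jm rk | FF i].
  have jrk : (j * k + r < m * k)%N by nia.
  have := FF (Ordinal jrk).
  by rewrite /= divnMDl // divn_small // addn0 modnMDl modn_small.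
by apply: FF; rewrite ?ltn_divLR ?ltn_mod.
Qed.

Lemma prod_ord_modn (R : pzSemiRingType) (k m : nat) (F : nat -> R) :
  \prod_(i < m * k) F (i %% k)%N = (\prod_(r < k) F r) ^+ m.
Proof.
elim: m => [|m IH]; first by rewrite mul0n big_ord0 expr0.
rewrite mulSn big_split_ord exprS -IH; congr (_ * _).
- by apply: eq_bigr => i _; rewrite /= modn_small.
- by apply: eq_bigr => i _; rewrite /= modnDl.
Qed.

Section hard_spheres.
Variable R : realType.
Implicit Types (S : set (R * R)) (a b m x : R).

Definition hard_spheres S :=
  forall p q, S p -> S q -> p <> q -> p.2 + q.2 <= `|p.1 - q.1|.

Definition centres_in S (B : set R) : set (R * R) :=
  S `&` (B `*` [set r | 0 <= r]).

Lemma hard_spheres_shield S (p c : R * R) m : hard_spheres S ->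
  S p -> S c -> 0 <= p.2 -> (c.1 < p.1 < m) \/ (m < p.1 < c.1) ->
  ~ `|m - c.1| <= c.2.
Proof.
move=> hS Sp Sc p2 between; have pc : p <> c by move=> pc; subst; lra.
have := hS _ _ Sp Sc pc; rewrite ler_norml.
case: between => /andP[? ?]; [rewrite ger0_norm|rewrite ler0_norm]; lra.
Qed.

Lemma hard_spheres_pair_radius S a b (p : R * R) : hard_spheres S ->
  has_n_points (centres_in S [set` `[a, b[%R]) 2 ->
  centres_in S [set` `[a, b[%R] p -> p.2 < b - a.
Proof.
move=> hS /has_2_points [q1 [q2 [Wq1 Wq2 q12]]] [Sp [/= + _]].
have [q [[Sq [/= + q2_ge0]] qp]] : exists q, centres_in S [set` `[a, b[%R] q /\ q <> p.
  have [<-|/eqP q1p] := eqVneq q1 p; last by exists q1.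
  by exists q2; split => // /esym.
rewrite !in_itv /= => /andP[aq qb] /andP[ap pb].
have := hS _ _ Sp Sq (nesym qp).
by have [qp1|qp1] := lerP q.1 p.1; lra.
Qed.

(* The default value [1] of [nth] provides the right end [pattern_cut 3 = 1]. *)
Definition pattern_cut (r : nat) : R := nth 1 [:: 0; 8^-1; 7/8] r.
Definition window x (r : nat) : set R :=
  [set` `[x + pattern_cut r, x + pattern_cut r.+1[%R].
Definition window_count (r : nat) : nat := (if r == 1 then 0 else 2)%N.

Definition gap_pattern S x := forall r, (r < 3)%N ->
  has_n_points (centres_in S (window x r)) (window_count r).

Lemma gap_pattern_uncovered S x : hard_spheres S -> gap_pattern S x ->
  ~ covered S (x + 2^-1).
Proof.
move=> hS pat [c Sc cov]; move: (cov); rewrite ler_norml => /andP[cl cr].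
have c2 : 0 <= c.2 by lra.
have W0 := pat 0%N isT; have W1 := pat 1%N isT; have W2 := pat 2%N isT.
rewrite /window /pattern_cut /window_count /= in W0 W1 W2.
have c_in a b : a <= c.1 < b -> centres_in S [set` `[a, b[%R] c.
  by move=> cab; split=> //=; rewrite in_itv.
have [a [_ [[Sa [/= + a2]] _ _]]] := has_2_points W0.
have [b [_ [[Sb [/= + b2]] _ _]]] := has_2_points W2.
rewrite !in_itv /= => /andP[b1 b1'] /andP[a1 a1'].
have [c_lt|c_ge] := ltP c.1 x.
  by apply: (hard_spheres_shield hS Sa Sc a2 _ cov); left; apply/andP; lra.
have [c_lt0|c_ge0] := ltP c.1 (x + 8^-1).
  have := hard_spheres_pair_radius hS W0 (c_in _ _ _); lra.
have [c_lt1|c_ge1] := ltP c.1 (x + 7/8).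
  by have := c_in (x + 8^-1) (x + 7/8); rewrite (has_0_points W1); apply; lra.
have [c_lt2|c_ge2] := ltP c.1 (x + 1).
  have := hard_spheres_pair_radius hS W2 (c_in _ _ _); lra.
by apply: (hard_spheres_shield hS Sb Sc b2 _ cov); right; apply/andP; lra.
Qed.

Lemma window_sub x r : (r < 3)%N -> window x r `<=` [set y | x <= y < x + 1].
Proof.
rewrite /window /pattern_cut => + y /=; rewrite in_itv /=.
by case: r => [|[|[|]]] //= _ /andP[? ?]; apply/andP; lra.
Qed.

Lemma measurable_window x r : measurable (window x r).
Proof. exact: measurable_itv. Qed.

Lemma bounded_window x r : (r < 3)%N -> bounded_set (window x r).
Proof.
move=> r3; apply: (@bounded_set_sub_itv _ _ x (x + 1)) => y.
by move=> /(window_sub r3) /andP[? ?]; apply/andP; lra.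
Qed.

Lemma pattern_cut_mono r r' : (r < r')%N -> (r' < 3)%N ->
  pattern_cut r.+1 <= pattern_cut r'.
Proof.
by rewrite /pattern_cut; case: r' => [|[|[|]]] //; case: r => [|[|]] //= _ _; lra.
Qed.

Lemma pattern_cut_lt r : (r < 3)%N -> pattern_cut r < pattern_cut r.+1.
Proof. by rewrite /pattern_cut; case: r => [|[|[|]]] //= _; lra. Qed.

Lemma window_disjoint x r r' : (r < 3)%N -> (r' < 3)%N -> r != r' ->
  window x r `&` window x r' = set0.
Proof.
wlog rr' : r r' / (r < r')%N => [wlog_rr'|r3 r'3 _].
  move=> r3 r'3; rewrite neq_ltn => /orP[lt_rr'|lt_r'r]; last rewrite setIC.
    by apply: wlog_rr'; rewrite // neq_ltn lt_rr'.
  by apply: wlog_rr'; rewrite // neq_ltn lt_r'r.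
apply/seteqP; split => // y []; rewrite /window /= !in_itv /= => /andP[_ ?] /andP[? _].
by have := pattern_cut_mono rr' r'3; lra.
Qed.

Lemma leb_window x r : (r < 3)%N ->
  leb (window x r) = pattern_cut r.+1 - pattern_cut r.
Proof.
rewrite /leb /window lebesgue_measure_itv /= lte_fin ltrD2l => /pattern_cut_lt->/=.
by rewrite opprD addrACA subrr add0r.
Qed.

Definition spaced (xs : seq R) :=
  uniq xs /\ {in xs &, forall x y, x != y -> 1 <= `|x - y|}.

Lemma spaced_perm xs ys : perm_eq xs ys -> spaced xs -> spaced ys.
Proof.
move=> pxy [uxs sxs]; split=> [|x y]; first by rewrite -(perm_uniq pxy).
by rewrite -!(perm_mem pxy); apply: sxs.
Qed.

Lemma spaced_cons x xs : spaced (x :: xs) -> spaced xs.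
Proof.
move=> [/andP[_ uxs] sxs]; split=> // y z yxs zxs.
by apply: sxs; rewrite inE ?yxs ?zxs orbT.
Qed.

Definition pattern_windows (xs : seq R) (i : nat) : set R :=
  window (nth 0 xs (i %/ 3)) (i %% 3).

Lemma pattern_windows_disjoint xs i j : spaced xs ->
  (i < size xs * 3)%N -> (j < size xs * 3)%N -> i != j ->
  pattern_windows xs i `&` pattern_windows xs j = set0.
Proof.
rewrite /pattern_windows => -[uxs sxs] ixs jxs ij.
have [eij|nij] := eqVneq (i %/ 3)%N (j %/ 3)%N.
  rewrite eij; apply: window_disjoint; rewrite ?ltn_mod //.
  by apply: contra ij => /eqP mij; rewrite (divn_eq i 3) (divn_eq j 3) eij mij.
rewrite -ltn_divLR // in ixs; rewrite -ltn_divLR // in jxs.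
have := sxs _ _ (mem_nth 0 ixs) (mem_nth 0 jxs).
rewrite nth_uniq // => /(_ nij) sep.
apply/seteqP; split => // y [/window_sub + /window_sub]; rewrite !ltn_mod /=.
move=> /(_ isT) /andP[? ?] /(_ isT) /andP[? ?].
by case: (lerP (nth 0 xs (i %/ 3)) (nth 0 xs (j %/ 3))) sep; lra.
Qed.
End hard_spheres.
Arguments pattern_cut {R} r.

Lemma connected_component_sub_gaps (R : realType) (G : set R) (y lo hi : R) :
  G y -> ~ G lo -> ~ G hi -> lo <= y <= hi ->
  connected_component G y `<=` [set z | lo < z < hi].
Proof.
move=> Gy Glo Ghi /andP[loy yhi] z Cz.
have Cy : connected_component G y y by exact: connected_component_refl.
have itvC : is_interval (connected_component G y).
  by apply/connected_intervalP; exact: component_connected.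
have CG := @connected_component_sub _ G y.
rewrite /= !ltNge; apply/andP; split; apply/negP => zb.
- by apply: Glo (CG _ (itvC z y Cz Cy lo _)); apply/andP.
- by apply: Ghi (CG _ (itvC y z Cy Cz hi _)); apply/andP.
Qed.

Lemma not_percolates_of_gap_patterns (R : realType) (S : set (R * R)) :
  hard_spheres S ->
  (forall N, exists2 j, (N <= j)%N & gap_pattern S j%:R) ->
  (forall N, exists2 j, (N <= j)%N & gap_pattern S (- j%:R)) ->
  ~ percolates S.
Proof.
move=> hS right left [y Gy]; apply.
have /archi_boundP : 0 <= `|y| + 1 by rewrite addr_ge0.
set N := Num.bound _ => yN.
have [j Nj /(gap_pattern_uncovered hS) Gj] := right N.
have [k Nk /(gap_pattern_uncovered hS) Gk] := left N.
have /andP[yl yr] : - `|y| <= y <= `|y| by rewrite -ler_norml.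
have [Nj' Nk'] : (N%:R <= j%:R :> R) /\ (N%:R <= k%:R :> R) by rewrite !ler_nat.
have yC : - k%:R + 2^-1 <= y <= j%:R + 2^-1 by apply/andP; lra.
apply: (@bounded_set_sub_itv _ _ (- k%:R + 2^-1) (j%:R + 2^-1)) => z.
by move=> /(connected_component_sub_gaps Gy Gk Gj yC) /andP[? ?]; apply/andP; lra.
Qed.

Lemma ge0_lee_expr_eq0 (R : realType) (x : \bar R) (s : R) : `|s| < 1 ->
  (0 <= x)%E -> (forall m, x <= (s ^+ m)%:E)%E -> x = 0%E.
Proof.
move=> s1 x0 xs; have := xs 0%N; rewrite expr0.
case: x x0 xs => [r + rs _| |] //; rewrite lee_fin => r0.
congr EFin; apply/eqP; rewrite eq_le r0 andbT.
apply: (ler_cvg_to (cvg_cst r) (cvg_expr s1)); apply: nearW => m.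
by rewrite -lee_fin.
Qed.

Lemma measurable_bigcap_seq d (T : measurableType d) (U : choiceType)
    (xs : seq U) (F : U -> set T) :
  (forall x, measurable (F x)) -> measurable (\bigcap_(x in [set` xs]) F x).
Proof. by move=> mF; rewrite bigcap_seq; exact: bigsetI_measurable. Qed.

Section poisson_gap_patterns.
Context (R : realType) (dT : measure_display) (T : measurableType dT)
  (P : probability T R) (Lam : T -> set (R * R)) (lam : R).
Hypothesis lam_gt0 : 0 < lam.
Hypothesis measurable_count : forall (B : set R) (n : nat),
  measurable B -> bounded_set B ->
  measurable [set w | has_n_points (centre_pts Lam w B) n].
Hypothesis count_law : forall (k : nat) (B : 'I_k -> set R) (n : 'I_k -> nat),
  (forall i, measurable (B i)) -> (forall i, bounded_set (B i)) ->
  (forall i j, i != j -> B i `&` B j = set0) ->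
  P [set w | forall i, has_n_points (centre_pts Lam w (B i)) (n i)] =
  (\prod_(i < k) (expR (- (lam * leb (B i))) *
                  (lam * leb (B i)) ^+ n i / (n i)`!%:R))%:E.

Definition poisson_weight (l : R) (n : nat) : R :=
  expR (- (lam * l)) * (lam * l) ^+ n / n`!%:R.

Definition pattern_prob : R :=
  \prod_(r < 3) poisson_weight (pattern_cut r.+1 - pattern_cut r) (window_count r).

Definition pattern_event (x : R) : set T := [set w | gap_pattern (Lam w) x].

Lemma pattern_prob_gt0 : 0 < pattern_prob.
Proof.
apply: prodr_gt0 => r _; rewrite /poisson_weight.
have l_gt0 : 0 < lam * (pattern_cut r.+1 - pattern_cut r).
  by rewrite mulr_gt0 // subr_gt0 pattern_cut_lt.
by rewrite !mulr_gt0 ?expR_gt0 ?exprn_gt0 // invr_gt0 ltr0n fact_gt0.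
Qed.

Lemma measurable_pattern_event x : measurable (pattern_event x).
Proof.
apply: (@bigcap_measurableType _ _ (fun r => [set w |
  has_n_points (centre_pts Lam w (window x r)) (window_count r)]) `I_3) => r r3.
exact: measurable_count (measurable_window x r) (bounded_window x r3).
Qed.

Lemma prob_patterns xs : spaced xs ->
  P (\bigcap_(x in [set` xs]) pattern_event x) = (pattern_prob ^+ size xs)%:E.
Proof.
move=> sxs.
pose F w j r :=
  has_n_points (centre_pts Lam w (window (nth 0 xs j) r)) (window_count r).
have -> : \bigcap_(x in [set` xs]) pattern_event x =
    [set w | forall i : 'I_(size xs * 3), has_n_points
      (centre_pts Lam w (pattern_windows xs i)) (window_count (i %% 3))].
  apply/seteqP; split => w /=.
  - move=> pw; apply/(@forall_ord_divmod 3 _ (F w)) => // j r jxs.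
    exact: pw (mem_nth 0 jxs) r.
  - by move=> /(@forall_ord_divmod 3 _ (F w)) pw x /(nthP 0)[j jxs <-] r; apply: pw.
rewrite count_law; first last.
- by move=> i j ij; apply: pattern_windows_disjoint.
- by move=> i; apply: bounded_window; rewrite ltn_mod.
- by move=> i; apply: measurable_window.
congr EFin; rewrite -(prod_ord_modn 3 _ (fun r =>
  poisson_weight (pattern_cut r.+1 - pattern_cut r) (window_count r))).
by apply: eq_bigr => i _; rewrite leb_window ?ltn_mod.
Qed.

Lemma prob_patterns_gaps xs ys : spaced (xs ++ ys) ->
  P (\bigcap_(x in [set` xs]) pattern_event x `&`
     \bigcap_(y in [set` ys]) ~` pattern_event y) =
  (pattern_prob ^+ size xs * (1 - pattern_prob) ^+ size ys)%:E.
Proof.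
elim: ys xs => [|y ys IH] xs sxs.
  by rewrite cats0 in sxs; rewrite set_nil bigcap_set0 setIT prob_patterns // expr0 mulr1.
have syxs : spaced (y :: xs ++ ys) by apply: spaced_perm sxs; rewrite -cat1s perm_catCA.
have mE (zs : seq R) : measurable (\bigcap_(x in [set` zs]) pattern_event x `&`
                                   \bigcap_(z in [set` ys]) ~` pattern_event z).
  by apply: measurableI; apply: measurable_bigcap_seq => x;
    [|apply: measurableC]; exact: measurable_pattern_event.
have -> : \bigcap_(x in [set` xs]) pattern_event x `&`
          \bigcap_(z in [set` y :: ys]) ~` pattern_event z =
    (\bigcap_(x in [set` xs]) pattern_event x `&`
     \bigcap_(z in [set` ys]) ~` pattern_event z) `\` pattern_event y.
  rewrite [\bigcap_(z in [set` y :: ys]) _]bigcap_seq big_cons -bigcap_seq.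
  by rewrite setDE setIA setIAC.
rewrite measureD; last 3 first.
- exact: mE.
- exact: measurable_pattern_event.
- exact: le_lt_trans (probability_le1 _ (mE _)) (ltry _).
have -> : \bigcap_(x in [set` xs]) pattern_event x `&`
          \bigcap_(z in [set` ys]) ~` pattern_event z `&` pattern_event y =
    \bigcap_(x in [set` y :: xs]) pattern_event x `&`
    \bigcap_(z in [set` ys]) ~` pattern_event z.
  rewrite [\bigcap_(x in [set` y :: xs]) _]bigcap_seq big_cons -bigcap_seq.
  by rewrite setIAC (setIC (pattern_event y)).
transitivity ((pattern_prob ^+ size xs * (1 - pattern_prob) ^+ size ys)%:E -
    (pattern_prob ^+ size (y :: xs) * (1 - pattern_prob) ^+ size ys)%:E)%E.
  by congr (_ - _)%E; apply: IH => //; exact: spaced_cons syxs.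
by rewrite -EFinB /= !exprS; congr EFin; ring.
Qed.

Lemma pattern_prob_le1 : pattern_prob <= 1.
Proof.
have s0 : spaced [:: 0 : R].
  by split=> // x y; rewrite !inE => /eqP-> /eqP->; rewrite eqxx.
rewrite -lee_fin -[pattern_prob]expr1 -(prob_patterns s0) probability_le1 //.
by apply: measurable_bigcap_seq; exact: measurable_pattern_event.
Qed.

Lemma ae_gap_patterns_unbounded (g : nat -> R) :
  (forall u v, u != v -> 1 <= `|g u - g v|) ->
  {ae P, forall w N, exists2 j, (N <= j)%N & gap_pattern (Lam w) (g j)}.
Proof.
move=> sep_g.
have g_inj : injective g.
  by move=> u v guv; have [//|/sep_g] := eqVneq u v; rewrite guv subrr normr0 ler10.
have spaced_g N m : spaced [seq g (N + j)%N | j <- iota 0 m].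
  split; first by rewrite map_inj_uniq ?iota_uniq //; exact: inj_comp g_inj (@addnI N).
  move=> _ _ /mapP[u _ ->] /mapP[v _ ->] neq_g.
  by apply: sep_g; apply: contra neq_g => /eqP->.
have gaps_null N : P.-negligible (\bigcap_j ~` pattern_event (g (N + j)%N)).
  exists (\bigcap_j ~` pattern_event (g (N + j)%N)); split => //.
    by apply: bigcapT_measurable => j; exact/measurableC/measurable_pattern_event.
  apply: (@ge0_lee_expr_eq0 _ _ (1 - pattern_prob)) => [|//|m].
    have := pattern_prob_gt0; have := pattern_prob_le1 => pc_le1 pc_gt0.
    by rewrite ger0_norm ?subr_ge0 // ltrBlDr ltrDl.
  have := @prob_patterns_gaps [::] _ (spaced_g N m).
  rewrite set_nil bigcap_set0 setTI size_map size_iota expr0 mul1r => <-.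
  apply: le_measure; rewrite ?inE.
  - by apply: bigcapT_measurable => j; exact/measurableC/measurable_pattern_event.
  - by apply: measurable_bigcap_seq => y; exact/measurableC/measurable_pattern_event.
  - by move=> w gw _ /mapP[j _ ->]; exact: gw.
apply: negligibleS (negligible_bigcup gaps_null) => w /= not_unbounded.
apply: contrapT => no_tail; apply: not_unbounded => N.
apply: contrapT => no_pattern; apply: no_tail; exists N => // j _ pat_j.
by apply: no_pattern; exists (N + j)%N => //; exact: leq_addr.
Qed.
End poisson_gap_patterns.

Lemma natr_dist_ge1 (R : realDomainType) (u v : nat) :
  u != v -> 1 <= `|u%:R - v%:R : R|.
Proof.
move=> neq_uv; wlog lt_uv : u v neq_uv / (u < v)%N => [wlog_uv|].
  have [/wlog_uv->//|lt_vu|eq_uv] := ltngtP u v; last by rewrite eq_uv eqxx in neq_uv.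
  by rewrite distrC wlog_uv // eq_sym.
by rewrite distrC -natrB ?(ltnW lt_uv) // normr_nat ler1n subn_gt0.
Qed.

Theorem mainTheorem4 (R : realType) (dT : measure_display) (T : measurableType dT)
  (P : probability T R) (Lam : T -> set (R * R)) :
  Poisson_sphere_process P Lam -> hard_sphere_process P Lam ->
  {ae P, forall w, ~ percolates (Lam w)}.
Proof.
move=> [_ [lam [lam_gt0 [_ measurable_count count_law]]]] [_ hard_ae].
have right := ae_gap_patterns_unbounded lam_gt0 measurable_count count_law
  (g := fun j => j%:R) (@natr_dist_ge1 R).
have sep_neg (u v : nat) : u != v -> 1 <= `|- u%:R - - v%:R : R|.
  by rewrite opprK addrC distrC; exact: natr_dist_ge1.
have left := ae_gap_patterns_unbounded lam_gt0 measurable_count count_law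
  (g := fun j => - j%:R) sep_neg.
near=> w; apply: not_percolates_of_gap_patterns.
- exact: (near hard_ae w).
- exact: (near right w).
- exact: (near left w).
Unshelve. all: by end_near.
Qed.
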